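(* Let $n=m\delta$ with integers $m,\delta\ge 1$, let $V=\mathbb{F}_2^n=V_1\times\cdots\times V_\delta$ with each brick $V_j\cong\mathbb{F}_2^m$, where $V_j$ consists of the coordinates $(j-1)m,\dots,jm-1$. Let $\gamma\in\mathrm{Sym}(V)$ be a parallel S-Box, i.e. $(x_1,\dots,x_\delta)\gamma=(x_1\gamma_1,\dots,x_\delta\gamma_\delta)$ for $x_j\in V_j$, where each $\gamma_j\in\mathrm{Sym}(V_j)$ and $0\gamma_j\neq 0$. Let $\lambda\in\mathrm{Sym}(V)$ be an invertible linear map (mixing layer) which is non-type-preserving. For $k\in V$ let $\sigma_k:v\mapsto v\boxplus k$ be the translation by $k$ modulo $2^n$, and let $\Gamma_\infty=\langle \gamma\lambda\sigma_k : k\in V\rangle\le\mathrm{Sym}(V)$ be the group generated by the round functions $\varepsilon_k=\gamma\lambda\sigma_k$. Then $\Gamma_\infty$ is primitive on $V$.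
   Context: A vector $a=(a_0,\dots,a_{n-1})\in V$ is identified with the integer $\sum_i a_i2^i$, and $\boxplus$ is addition of these integers modulo $2^n$. Maps act on the right and are composed left to right. Type of a subset: for $D\subseteq V$, its type is the sequence of $\delta$ symbols whose $j$-th entry is ''white'' if the projection of $D$ onto $V_j$ has size $1$, ''ruled'' if that projection has size $t$ with $1<t<2^m$, and ''black'' if the projection is all of $V_j$. Non-type-preserving: an invertible linear map $\lambda$ of $V$ is called non-type-preserving if for every subset $D\subseteq V$ whose type is of the form (first $a$ entries white, then $b$ entries ruled, then $c$ entries black) with integers $a,c\ge 0$, $b\in\{0,1\}$, $a+b+c=\delta$, and not all-white and not all-black, the type of $D\lambda=\{v\lambda:v\in D\}$ differs from the type of $D$. A group $G\le\mathrm{Sym}(V)$ is primitive if it is transitive and preserves no partition of $V$ other than $\{V\}$ and the partition into singletons. *)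

From mathcomp Require Import all_boot all_order all_algebra all_fingroup all_solvable.
Set Implicit Arguments. Unset Strict Implicit. Unset Printing Implicit Defensive.
Import GRing.Theory.
Local Open Scope ring_scope.

Notation vec n := 'rV['F_2]_n.

Definition vec2int n (v : vec n) : nat := (\sum_(i < n) (val (v ord0 i)) * 2 ^ i)%N.

Definition int2vec n (x : nat) : vec n := \row_(i < n) (odd (x %/ 2 ^ i))%:R.

Definition boxplus n (v k : vec n) : vec n :=
  int2vec n ((vec2int v + vec2int k) %% 2 ^ n).

Lemma modn_exp2S x n : (x %% 2 ^ n.+1 = x %% 2 ^ n + odd (x %/ 2 ^ n) * 2 ^ n)%N.
Proof.
have Hp : (0 < 2 ^ n)%N by rewrite expn_gt0.
rewrite -modn2 modn_divl -expnS.
set y := (x %% 2 ^ n.+1)%N.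
have -> : (x %% 2 ^ n = y %% 2 ^ n)%N.
  by rewrite /y modn_dvdm // expnS dvdn_mull.
by rewrite addnC -divn_eq.
Qed.

Lemma sum_bits x n : (\sum_(i < n) odd (x %/ 2 ^ i) * 2 ^ i = x %% 2 ^ n)%N.
Proof.
elim: n => [|n IH]; first by rewrite big_ord0 expn0 modn1.
by rewrite big_ord_recr /= IH modn_exp2S.
Qed.

Lemma vec2intK n x : vec2int (int2vec n x) = (x %% 2 ^ n)%N.
Proof.
rewrite /vec2int -sum_bits; apply: eq_bigr => i _.
by rewrite mxE; case: odd.
Qed.

Lemma int2vec_onto n (v : vec n) : exists2 x, (x < 2 ^ n)%N & v = int2vec n x.
Proof.
pose g (x : 'I_(2 ^ n)) : vec n := int2vec n x.
have ig : injective g.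
  move=> x y /(congr1 (@vec2int n)); rewrite !vec2intK !modn_small //.
  by move/val_inj.
have Hc : #|codom g| = #|vec n|.
  by rewrite card_codom // card_mx card_Fp // card_ord mul1n.
have /subset_cardP/(_ (subset_predT _)) Heq := Hc.
have : v \in codom g by rewrite Heq.
by case/codomP=> x ->; exists x.
Qed.

Lemma boxplus_inj n (k : vec n) : injective (fun v => boxplus v k).
Proof.
move=> v w; rewrite /boxplus.
have [x Hx ->] := int2vec_onto v; have [y Hy ->] := int2vec_onto w.
move/(congr1 (@vec2int n)); rewrite !vec2intK !modn_mod !(modn_small Hx, modn_small Hy).
by move/eqP; rewrite eqn_modDr !modn_small // => /eqP ->.
Qed.

Definition sigma n (k : vec n) : {perm vec n} := perm (@boxplus_inj n k).

(* bricks: coordinate t of brick j (0-based) is coordinate j*m + t of V *)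
Lemma bidx_lt m d (j : 'I_d) (t : 'I_m) : (j * m + t < m * d)%N.
Proof.
have Ht := ltn_ord t; have Hj := ltn_ord j.
apply: (@leq_trans (j * m + m)); first by rewrite ltn_add2l.
by rewrite -mulSnr mulnC leq_mul2l Hj orbT.
Qed.

Definition bidx m d (j : 'I_d) (t : 'I_m) : 'I_(m * d) := Ordinal (bidx_lt j t).

Definition brick m d (j : 'I_d) (v : vec (m * d)) : vec m :=
  \row_(t < m) v 0 (bidx j t).

Definition parallel_sbox m d (gamma : {perm vec (m * d)})
    (gammas : 'I_d -> {perm vec m}) : Prop :=
  (forall v j, brick j (gamma v) = gammas j (brick j v)).

Definition proj m d (j : 'I_d) (D : {set vec (m * d)}) : {set vec m} :=
  [set brick j v | v in D].

Inductive colour := White | Ruled | Black.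

Definition has_type m d (D : {set vec (m * d)}) (c : 'I_d -> colour) : Prop :=
  forall j, match c j with
            | White => #|proj j D| = 1%N
            | Ruled => (1 < #|proj j D| < 2 ^ m)%N
            | Black => proj j D = [set: vec m]
            end.

Definition shape d (a b : nat) : 'I_d -> colour :=
  fun j => if (j < a)%N then White else if (j < a + b)%N then Ruled else Black.
Arguments shape : clear implicits.

Definition non_type_preserving m d (lambda : {perm vec (m * d)}) : Prop :=
  forall a b c : nat, (b <= 1)%N -> (a + b + c)%N = d ->
    a <> d -> c <> d ->
  forall D : {set vec (m * d)}, has_type D (shape d a b) ->
    ~ has_type (lambda @: D) (shape d a b).

Definition is_linear n (f : vec n -> vec n) : Prop :=
  exists A : 'M['F_2]_n, forall v, f v = v *m A.

(* round function eps_k = gamma lambda sigma_k (maps act on the right,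
   mathcomp's perm product is left-to-right: (p * q) x = q (p x)) *)
Definition round n (gamma lambda : {perm vec n}) (k : vec n) : {perm vec n} :=
  (gamma * lambda * sigma k)%g.

Definition Gamma_inf n (gamma lambda : {perm vec n}) : {group {perm vec n}} :=
  <<[set round gamma lambda k | k : vec n]>>%G.

From mathcomp Require Import all_boot all_order all_algebra all_fingroup all_solvable.
From mathcomp Require Import zify.
Set Implicit Arguments. Unset Strict Implicit. Unset Printing Implicit Defensive.
Import GRing.Theory.

(* Since sigma_0 = 1, Gamma_inf contains the translations sigma_k = eps_0^-1 eps_k; hence it
   is transitive and each of its block systems is invariant under the cyclic group
   (V, [+]) = Z/2^nZ.  The block of 0 is then a subgroup 2^iZ/2^nZ, i.e. the set of vectors
   whose first i coordinates vanish, and the blocks are its cosets: the sets of vectors with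
   prescribed first i coordinates.  Such a coset has i/m white bricks, then one ruled brick
   if m does not divide i, then black bricks.  The parallel S-box preserves types, and
   eps_0 = gamma lambda maps the block of 0 onto a block, which has the same type; so lambda
   preserves that type, which is excluded when the system is nontrivial, i.e. 0 < i < n. *)

Lemma odd_div_modn x i t : (t < i)%N -> odd (x %/ 2 ^ t) = odd (x %% 2 ^ i %/ 2 ^ t).
Proof.
move=> lt_ti; rewrite {1}(divn_eq x (2 ^ i)).
have -> : (2 ^ i = 2 ^ (i - t) * 2 ^ t)%N by rewrite -expnD subnK // ltnW.
rewrite mulnA divnMDl ?expn_gt0 // oddD oddM oddX /=.
by rewrite orbF subn_eq0 leqNgt lt_ti andbF.
Qed.

Lemma eq_low_bitsP x z i :
  (forall t, (t < i)%N -> odd (x %/ 2 ^ t) = odd (z %/ 2 ^ t)) <-> x = z %[mod 2 ^ i].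
Proof.
split=> [eq_bits | eq_xz t lt_ti].
  by rewrite -!sum_bits; apply: eq_bigr => t _; rewrite eq_bits.
by rewrite (odd_div_modn x lt_ti) (odd_div_modn z lt_ti) eq_xz.
Qed.

Section BinaryEncoding.

Variable n : nat.
Implicit Types (x z : nat) (v y : vec n).

Lemma int2vec_modn x : int2vec n (x %% 2 ^ n) = int2vec n x.
Proof. by apply/rowP => t; rewrite !mxE -odd_div_modn. Qed.

Lemma int2vec0 : int2vec n 0 = 0%R.
Proof. by apply/rowP => t; rewrite !mxE div0n. Qed.

Lemma int2vecD x z : boxplus (int2vec n x) (int2vec n z) = int2vec n (x + z).
Proof. by rewrite /boxplus !vec2intK -[in RHS]int2vec_modn modnDm. Qed.

Lemma boxplus0v v : boxplus 0%R v = v.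
Proof. by have [x _ ->] := int2vec_onto v; rewrite -int2vec0 int2vecD. Qed.

Lemma boxplusv0 v : boxplus v 0%R = v.
Proof. by have [x _ ->] := int2vec_onto v; rewrite -int2vec0 int2vecD addn0. Qed.

Lemma sigmaE k v : sigma k v = boxplus v k.
Proof. by rewrite permE. Qed.

Lemma sigma0 : sigma (0%R : vec n) = 1%g.
Proof. by apply/permP => v; rewrite sigmaE perm1 boxplusv0. Qed.

Lemma sigma_at0 y : sigma y 0%R = y.
Proof. by rewrite sigmaE boxplus0v. Qed.

Lemma addn_closed_periodic_pow2 (P : pred nat) :
    P 0 -> (forall x z, P x -> P z -> P (x + z)) -> (forall x, P (x + 2 ^ n) = P x) ->
  exists2 i, (i <= n)%N & P =1 dvdn (2 ^ i).
Proof.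
move=> P0 PD Pper.
have PM k x : P x -> P (k * x).
  by move=> Px; elim: k => [|k IHk]; rewrite ?mul0n // mulSn PD.
have PperM k x : P (x + k * 2 ^ n) = P x.
  elim: k => [|k IHk]; first by rewrite mul0n addn0.
  by rewrite mulSn addnCA addnC Pper IHk.
have PB x z : (z <= x)%N -> P x -> P z -> P (x - z).
  move=> le_zx Px Pz; rewrite -(PperM z).
  have -> : (x - z + z * 2 ^ n = x + (2 ^ n).-1 * z)%N.
    by have := expn_gt0 2 n; nia.
  by rewrite PD ?PM.
have PN : P (2 ^ n) by rewrite -[2 ^ n]add0n Pper.
have ex_pos : exists s, (0 < s) && P s by exists (2 ^ n); rewrite expn_gt0 PN.
case: (ex_minnP ex_pos) => s /andP[s_gt0 Ps] s_min.
have dvd_s x : P x -> (s %| x)%N.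
  move=> Px; have Pr : P (x %% s).
    have -> : (x %% s = x - x %/ s * s)%N by rewrite {2}(divn_eq x s) addKn.
    by apply: PB; rewrite ?leq_divM ?PM.
  apply: contraT; rewrite /dvdn -lt0n => r_gt0.
  by have := s_min _ (introT andP (conj r_gt0 Pr)); rewrite leqNgt ltn_pmod.
have /(dvdn_pfactor _ _ (isT : prime 2))[i le_in def_s] := dvd_s _ PN.
by exists i => // x; apply/idP/idP => [/dvd_s | /dvdnP[k ->]]; rewrite -def_s // PM.
Qed.

End BinaryEncoding.

(* The coset y [+] 2^iZ of (V, [+]), see int2vec_low_coset. *)
Definition low_coset n i (y : vec n) : {set vec n} :=
  [set w : vec n | [forall t : 'I_n, (t < i)%N ==> (w ord0 t == y ord0 t)]].

Section LowCosets.

Variable n : nat.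
Implicit Types (x z : nat) (u v y : vec n).

Lemma int2vec_low_coset i x z : (i <= n)%N ->
  (int2vec n x \in low_coset i (int2vec n z)) = (x == z %[mod 2 ^ i]).
Proof.
move=> le_in; rewrite inE; apply/forallP/eqP => [eq_low | /eq_low_bitsP eq_bits t].
  apply/eq_low_bitsP => t lt_ti.
  have := eq_low (Ordinal (leq_trans lt_ti le_in)); rewrite /= lt_ti !mxE.
  by case: odd; case: odd.
by apply/implyP => /eq_bits; rewrite !mxE => ->.
Qed.

Lemma card_low_coset i y y' : #|low_coset i y| = #|low_coset i y'|.
Proof.
wlog suff: y y' / (#|low_coset i y| <= #|low_coset i y'|)%N.
  by move=> le_card; apply/eqP; rewrite eqn_leq !le_card.
rewrite -(card_imset _ (addIr (y' - y)%R)); apply/subset_leq_card/subsetP.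
move=> _ /imsetP[w + ->]; rewrite !inE => /forallP low_w.
apply/forallP => t; apply/implyP => /(implyP (low_w t)) /eqP.
by rewrite !mxE => ->; rewrite addrC subrK.
Qed.

Lemma sigma_low_coset0 i y : (i <= n)%N -> sigma y @: low_coset i 0%R = low_coset i y.
Proof.
move=> le_in; apply/eqP; rewrite eqEcard card_imset; last exact: perm_inj.
rewrite (card_low_coset i y 0) leqnn andbT; apply/subsetP => _ /imsetP[v + ->].
have [x _ ->] := int2vec_onto v; have [z _ ->] := int2vec_onto y.
rewrite -int2vec0 sigmaE int2vecD !int2vec_low_coset // => /eqP x0.
by rewrite -modnDml x0 mod0n add0n.
Qed.

Lemma boxplus_closed_low_coset (B : {set vec n}) :
    0%R \in B -> (forall u v, u \in B -> v \in B -> boxplus u v \in B) ->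
  exists2 i, (i <= n)%N & B = low_coset i 0%R.
Proof.
move=> B0 BD; pose P x := int2vec n x \in B.
have P0 : P 0 by rewrite /P int2vec0.
have PD x z : P x -> P z -> P (x + z) by rewrite /P -int2vecD; apply: BD.
have Pper x : P (x + 2 ^ n) = P x by rewrite /P -int2vec_modn modnDr int2vec_modn.
have [i le_in defP] := addn_closed_periodic_pow2 P0 PD Pper.
exists i => //; apply/setP => v; have [x _ ->] := int2vec_onto v.
by rewrite -int2vec0 int2vec_low_coset // -[_ \in B]/(P x) defP /dvdn mod0n.
Qed.

Lemma low_coset0 y : low_coset 0 y = [set: vec n].
Proof. by apply/setP => v; rewrite !inE; apply/forallP => t; rewrite ltn0. Qed.

Lemma low_coset_full i y : (n <= i)%N -> low_coset i y = [set y].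
Proof.
move=> le_ni; apply/setP => v; rewrite !inE.
apply/forallP/eqP => [low_v | -> t]; last by rewrite eqxx implybT.
by apply/rowP => t; apply/eqP/(implyP (low_v t)); apply: leq_trans le_ni.
Qed.

Lemma card_low_coset_proper i y : (0 < i < n)%N -> (1 < #|low_coset i y| < 2 ^ n)%N.
Proof.
case/andP=> i_gt0 lt_in.
pose flip (t : 'I_n) : vec n := (y + delta_mx 0 t)%R.
have flipE t t' : flip t ord0 t' = (y ord0 t' + (t' == t)%:R)%R by rewrite !mxE.
have flip_ne t : flip t ord0 t != y ord0 t.
  by rewrite flipE eqxx -subr_eq0 addrAC subrr add0r oner_eq0.
have flip_low (t : 'I_n) : (i <= t)%N -> flip t \in low_coset i y.
  move=> le_it; rewrite inE; apply/forallP => t'; apply/implyP => lt_t'i.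
  have ne_t't : t' != t by apply: contraTneq lt_t'i => ->; rewrite -leqNgt.
  by rewrite flipE (negbTE ne_t't) addr0.
apply/andP; split.
  have lt_n1n : (n.-1 < n)%N by rewrite prednK ?(leq_trans i_gt0 (ltnW lt_in)).
  apply/card_gt1P; exists y, (flip (Ordinal lt_n1n)); split.
  - by rewrite inE; apply/forallP => t; rewrite eqxx implybT.
  - by apply: flip_low; rewrite /= -ltnS prednK // (leq_trans i_gt0 (ltnW lt_in)).
  - by apply: contra (flip_ne (Ordinal lt_n1n)) => /eqP <-.
have lt_0n : (0 < n)%N by apply: leq_trans lt_in.
have : low_coset i y \proper [set: vec n].
  rewrite properT; apply: contra (flip_ne (Ordinal lt_0n)) => /eqP full.
  have : flip (Ordinal lt_0n) \in low_coset i y by rewrite full inE.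
  by rewrite inE => /forallP/(_ (Ordinal lt_0n)); rewrite i_gt0.
by move/proper_card; rewrite cardsT card_mx card_Fp // mul1n.
Qed.

End LowCosets.

Section Bricks.

Variables (m d : nat) (m_gt0 : (0 < m)%N).
Implicit Types (i : nat) (y : vec (m * d)) (D : {set vec (m * d)}).

Lemma proj_low_coset (j : 'I_d) i y :
  proj j (low_coset i y) = low_coset (i - j * m) (brick j y).
Proof.
apply/setP => u; apply/imsetP/idP => [[v + ->] | low_u].
  rewrite !inE => /forallP low_v; apply/forallP => t; apply/implyP => lt_t.
  by rewrite !mxE; apply: (implyP (low_v (bidx j t))); rewrite /= -ltn_subRL.
rewrite inE in low_u; pose w : vec (m * d) :=
  (\row_k (if (k %/ m)%N == j then u ord0 (Ordinal (ltn_pmod k m_gt0)) else y ord0 k))%R.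
exists w.
  rewrite inE; apply/forallP => k; apply/implyP => lt_ki; rewrite mxE.
  case: ifP => [/eqP def_j | _ //]; have def_k := divn_eq k m; rewrite def_j in def_k.
  set t := Ordinal (ltn_pmod k m_gt0).
  have /eqP -> : u ord0 t == brick j y ord0 t.
    by apply: (implyP (forallP low_u t)) => /=; lia.
  by rewrite mxE (_ : bidx j t = k) //; apply: val_inj; rewrite /= {2}def_k.
apply/rowP => t; rewrite !mxE /= divnMDl // divn_small // addn0 eqxx.
by congr (u _ _); apply: val_inj; rewrite /= modnMDl modn_small.
Qed.

Lemma low_coset_type i y : has_type (low_coset i y) (shape d (i %/ m) (0 < i %% m)%N).
Proof.
move=> j; rewrite /shape proj_low_coset.
have := divn_eq i m; have := ltn_pmod i m_gt0.
set a := i %/ m; set r := i %% m => lt_rm def_i.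
case: ltnP => [lt_ja | le_aj].
  have := leq_mul lt_ja (leqnn m); rewrite mulSn => le_jm.
  by rewrite low_coset_full ?cards1 //; lia.
have := leq_mul le_aj (leqnn m) => le_am.
case: ltnP => [lt_jab | le_abj].
  case: (posnP r) => [r0 | r_gt0]; first by move: lt_jab; rewrite r0 addn0 ltnNge le_aj.
  have -> : (i - j * m = r)%N by move: lt_jab; rewrite r_gt0 addn1 ltnS => le_ja; nia.
  by apply: card_low_coset_proper; rewrite r_gt0.
suff -> : (i - j * m = 0)%N by rewrite low_coset0.
move: le_abj; case: (posnP r) => [r0 | r_gt0]; rewrite ?addn0 ?addn1 => le_j; last first.
  by have := leq_mul le_j (leqnn m); rewrite mulSn; lia.
by have := leq_mul le_j (leqnn m); lia.
Qed.

Lemma parallel_sbox_type gamma gammas D c :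
  parallel_sbox gamma gammas -> has_type D c -> has_type (gamma @: D) c.
Proof.
move=> sbox typeD j.
have proj_gamma : proj j (gamma @: D) = gammas j @: proj j D.
  by rewrite /proj -!imset_comp; apply: eq_imset => v /=; rewrite sbox.
have card_proj : #|proj j (gamma @: D)| = #|proj j D|.
  by rewrite proj_gamma card_imset //; apply: perm_inj.
move: (typeD j); case: (c j); rewrite ?card_proj // => projT.
by apply/eqP; rewrite eqEcard subsetT card_proj projT leqnn.
Qed.

Lemma non_type_preserving_low_coset_shape lambda i D :
    non_type_preserving lambda -> (0 < i < m * d)%N ->
    has_type D (shape d (i %/ m) (0 < i %% m)%N) ->
  ~ has_type (lambda @: D) (shape d (i %/ m) (0 < i %% m)%N).
Proof.
move=> ntp /andP[i_gt0 lt_i]; have := divn_eq i m; have := ltn_pmod i m_gt0.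
set a := i %/ m; set r := i %% m => lt_rm def_i.
have lt_ad : (a < d)%N by rewrite ltn_divLR // mulnC.
apply: (ntp a (0 < r)%N (d - (a + (0 < r)))); rewrite ?leq_b1 //; case: (posnP r) => r0; nia.
Qed.

End Bricks.

Lemma partition_pblock_imset (T : finType) (P : {set {set T}}) (D : {set T}) :
  partition P D -> P = pblock P @: D.
Proof.
case/and3P=> /eqP coverP trivP P0; apply/setP => B; apply/idP/imsetP => [PB | [x Dx ->]].
  have /set0Pn[x Bx] : B != set0 by apply: contraNneq P0 => <-.
  exists x; last by rewrite (def_pblock trivP PB Bx).
  by rewrite -coverP; apply/bigcupP; exists B.
by rewrite pblock_mem ?coverP.
Qed.

Lemma pblock_perm (T : finType) (G : {group {perm T}}) (Q : {set {set T}}) g x :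
    partition Q [set: T] -> [acts G, on Q | 'P^*] -> g \in G ->
  g @: pblock Q x = pblock Q (g x).
Proof.
move=> /and3P[/eqP coverQ trivQ _] actsQ Gg.
have Qx : pblock Q x \in Q by rewrite pblock_mem ?coverQ.
symmetry; apply: def_pblock => //; last by rewrite imset_f // mem_pblock coverQ inE.
by have := (actsP actsQ) g Gg (pblock Q x); rewrite Qx.
Qed.

Section TranslationInvariantPartitions.

Variables (n : nat) (G : {group {perm vec n}}) (Q : {set {set vec n}}).
Hypotheses (sigmaG : forall k, sigma k \in G).
Hypotheses (partQ : partition Q [set: vec n]) (actsQ : [acts G, on Q | 'P^*]).

Lemma translations_transitive : [transitive G, on [set: vec n] | 'P].
Proof.
apply/imsetP; exists 0%R; rewrite ?inE //; apply/eqP; rewrite eqEsubset subsetT andbT.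
apply/subsetP => v _; apply/imsetP.
by exists (sigma v); [exact: sigmaG | exact: esym (sigma_at0 v)].
Qed.

Lemma pblock_sigma y : pblock Q y = sigma y @: pblock Q 0%R.
Proof. by rewrite (pblock_perm _ partQ actsQ (sigmaG y)) sigma_at0. Qed.

Lemma pblock_low_coset : exists2 i, (i <= n)%N & forall y, pblock Q y = low_coset i y.
Proof.
have /and3P[/eqP coverQ trivQ _] := partQ.
have B0 : (0 : vec n)%R \in pblock Q 0%R by rewrite mem_pblock coverQ inE.
have [u v Bu Bv | i le_in B_low] := boxplus_closed_low_coset B0.
  by rewrite -sigmaE -(same_pblock trivQ Bv) pblock_sigma imset_f.
by exists i => // y; rewrite pblock_sigma B_low sigma_low_coset0.
Qed.

Lemma imprimitivity_low_coset : (1 < #|Q| < #|[set: vec n]|)%N ->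
  exists2 i, (0 < i < n)%N & forall y, pblock Q y = low_coset i y.
Proof.
move=> /andP[Q_gt1 Q_lt]; have [i le_in blockQ] := pblock_low_coset.
have defQ : Q = low_coset i @: [set: vec n].
  by rewrite {1}(partition_pblock_imset partQ); apply: eq_imset.
rewrite defQ in Q_gt1 Q_lt; exists i => //; apply/andP; split.
  rewrite lt0n; apply: contraTneq Q_gt1 => ->; rewrite -leqNgt.
  apply: (@leq_trans #|[set [set: vec n]]|); last by rewrite cards1.
  apply/subset_leq_card/subsetP.
  by move=> _ /imsetP[y _ ->]; rewrite low_coset0 inE.
rewrite ltnNge; apply: contraTN Q_lt => le_ni; rewrite -leqNgt.
by rewrite (eq_imset _ (fun y => low_coset_full y le_ni)) card_imset //; apply: set1_inj.
Qed.

End TranslationInvariantPartitions.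

Lemma round_in_Gamma_inf n (gamma lambda : {perm vec n}) k :
  round gamma lambda k \in Gamma_inf gamma lambda.
Proof. by apply/mem_gen/imsetP; exists k. Qed.

Lemma sigma_in_Gamma_inf n (gamma lambda : {perm vec n}) k :
  sigma k \in Gamma_inf gamma lambda.
Proof.
have -> : sigma k = ((round gamma lambda 0%R)^-1 * round gamma lambda k)%g.
  by rewrite /round sigma0 mulg1 mulKg.
by rewrite groupM ?groupV ?round_in_Gamma_inf.
Qed.

Theorem mainTheorem2 (m d : nat) (hm : (1 <= m)%N) (hd : (1 <= d)%N)
    (gamma : {perm 'rV['F_2]_(m * d)}) (gammas : 'I_d -> {perm 'rV['F_2]_m})
    (lambda : {perm 'rV['F_2]_(m * d)}) :
  parallel_sbox gamma gammas ->
  (forall j, gammas j 0%R != 0%R) ->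
  is_linear lambda ->
  non_type_preserving lambda ->
  [primitive Gamma_inf gamma lambda, on [set: 'rV['F_2]_(m * d)] | 'P].
Proof.
move=> sbox _ _ ntp; have sigmaG := sigma_in_Gamma_inf gamma lambda.
rewrite /primitive translations_transitive //=.
apply/existsP => -[Q /and3P[partQ actsQ ntQ]].
have [i i_range blockQ] := imprimitivity_low_coset sigmaG partQ actsQ ntQ.
pose e0 := round gamma lambda 0%R.
have e0_block : lambda @: (gamma @: low_coset i 0%R) = low_coset i (e0 0%R).
  rewrite -!blockQ -(pblock_perm _ partQ actsQ (round_in_Gamma_inf _ _ _)) -imset_comp.
  by apply: eq_imset => v; rewrite /= /e0 /round sigma0 mulg1 permM.
apply: (non_type_preserving_low_coset_shape hm ntp i_range).
  exact: parallel_sbox_type sbox (low_coset_type hm i 0%R).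
by rewrite e0_block; apply: low_coset_type.
Qed.
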